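(* Let $r\ge1$ and $G\subset\mathbb{Z}_2^r$ a subgroup with $1^r=(1,\dots,1)\in G$. Then: (1) if $\dim G=1$, then $G=\langle1^r\rangle$; (2) if $\dim G=r$, then $G=\mathbb{Z}_2^r$; (3) if $\dim G=2$, then $G$ is decomposable; (4) if $\dim G=r-1$ and $G$ is indecomposable, then $r$ is even and $G=G_r^{\rm even}$.
   Context: $\dim G$ is the dimension over $\mathbb{Z}_2$. For $I\subset\{1,\dots,r\}$ let $\mathbb{Z}_2^I$ be the codewords supported in $I$. $G$ is decomposable if there is a partition $\{1,\dots,r\}=I\sqcup J$ with $I,J$ nonempty and $G=(G\cap\mathbb{Z}_2^I)\oplus(G\cap\mathbb{Z}_2^J)$ (i.e. $G$ is an orthogonal direct sum $G_1\perp G_2$ of codes on complementary coordinate sets); indecomposable otherwise. For even $r$, $G_r^{\rm even}=\{g\in\mathbb{Z}_2^r: g \text{ has an even number of nonzero coordinates}\}$. *)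

From HB Require Import structures.
From mathcomp Require Import all_boot all_order all_algebra.
Set Implicit Arguments. Unset Strict Implicit. Unset Printing Implicit Defensive.
Import GRing.Theory.
Local Open Scope ring_scope.

(* Z_2^r is modelled as row vectors 'rV['F_2]_r; subgroups of Z_2^r are
   exactly the 'F_2-subspaces, i.e. elements of {vspace 'rV['F_2]_r}. *)

Definition ones (r : nat) : 'rV['F_2]_r := const_mx 1.

Definition supported_in (r : nat) (I : {set 'I_r}) (v : 'rV['F_2]_r) : Prop :=
  forall i : 'I_r, i \notin I -> v 0 i = 0.

(* G is decomposable: there is a partition {1..r} = I ⊔ J, I, J nonempty,
   with G = (G ∩ Z_2^I) ⊕ (G ∩ Z_2^J) (the sum is automatically direct and
   the inclusion ⊇ is automatic, so we state ⊆ explicitly). *)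
Definition decomposable (r : nat) (G : {vspace 'rV['F_2]_r}) : Prop :=
  exists I : {set 'I_r},
    [/\ I != set0, ~: I != set0 &
      forall g, g \in G ->
        exists g1 g2, [/\ g = g1 + g2,
          g1 \in G, supported_in I g1,
          g2 \in G & supported_in (~: I) g2]].

Definition weight (r : nat) (v : 'rV['F_2]_r) : nat := #|[set i | v 0 i != 0]|.

Definition even_code (r : nat) : pred 'rV['F_2]_r := fun v => ~~ odd (weight v).
Arguments ones r : clear implicits.
Arguments even_code r : clear implicits.

From HB Require Import structures.
From mathcomp Require Import all_boot all_order all_algebra.
From mathcomp Require Import zify.
Set Implicit Arguments.
Unset Strict Implicit.
Unset Printing Implicit Defensive.
Import GRing.Theory.
Local Open Scope ring_scope.

(* Over F_2, if x and y both lie outside a hyperplane G then x + y lies in G,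
   so x |-> [x \notin G] is additive and G is the kernel of the functional
   x |-> sum of the x_i over S = {i | e_i \notin G}. If S is every coordinate,
   G is the even-weight code; otherwise membership in G only sees the
   coordinates in S, so G splits along S and its complement. In dimension 2,
   G = <1^r, g> splits along supp g, because restricting a 1^r + b g to
   supp g gives (a + b) g. *)

Lemma F2_cases (k : 'F_2) : k = 0 \/ k = 1.
Proof. by case: k => [[|[|]]] //= ?; [left|right]; apply: val_inj. Qed.

Lemma addvv_F2 (V : lmodType 'F_2) (x : V) : x + x = 0.
Proof. by rewrite -mulr2n -scaler_nat (_ : 2%:R = 0) ?scale0r //; apply/eqP. Qed.

Section Vspace.
Variables (K : fieldType) (vT : vectType K).
Implicit Types (U : {vspace vT}) (u v x : vT).

Lemma dimv_add_line U x : x \notin U -> \dim (U + <[x]>) = (\dim U).+1.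
Proof.
move=> xU; have x0 : x != 0 by apply: contraNneq xU => ->; rewrite mem0v.
apply/eqP; rewrite eqn_leq.
have [+ _] := dimv_add_leqif U <[x]>; rewrite dim_vline x0 addn1 => -> /=.
rewrite (ltn_leqif (dimv_leqif_sup (addvSl U _))).
by rewrite subv_add subvv -memvE xU.
Qed.

Lemma dimv1_vline U v : v \in U -> v != 0 -> \dim U = 1%N -> U = <[v]>%VS.
Proof.
by move=> vU v0 dimU; apply/eqP; rewrite eq_sym eqEdim -memvE vU dim_vline v0 dimU.
Qed.

Lemma dimv_fullv U : \dim U = \dim {:vT} -> U = fullv.
Proof. by move=> dimU; apply/eqP; rewrite eqEdim subvf dimU leqnn. Qed.

Lemma dimv2_addv_line U u v : u != 0 -> u \in U -> v \in U -> v \notin <[u]>%VS ->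
  \dim U = 2 -> U = (<[u]> + <[v]>)%VS.
Proof.
move=> u0 uU vU vu dimU; apply/eqP; rewrite eq_sym eqEdim subv_add -!memvE uU vU.
by rewrite dimv_add_line // dim_vline u0 dimU.
Qed.

End Vspace.

Lemma dim_rowv (K : fieldType) n : \dim {:'rV[K]_n} = n.
Proof. by rewrite dimvf /dim /= mul1n. Qed.

Section Codim1F2.
Variables (vT : vectType 'F_2) (G : {vspace vT}).
Hypothesis dimG : \dim G = (\dim {:vT}).-1.

Lemma codim1_memvD x y : x \notin G -> y \notin G -> x + y \in G.
Proof.
move=> xG yG; have : y \in (G + <[x]>)%VS.
  suff -> : (G + <[x]>)%VS = fullv by rewrite memvf.
  apply: dimv_fullv; have := dimvS (subvf (G + <[x]>)).
  by rewrite dimv_add_line // dimG; lia.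
case/memv_addP => g gG [_ /vlineP [k ->] yE].
case: (F2_cases k) => k_val; rewrite k_val in yE.
  by move: yG; rewrite yE scale0r addr0 gG.
by rewrite yE scale1r addrCA addvv_F2 addr0.
Qed.

Lemma codim1_notinD x y : (x + y \notin G) = (x \notin G) (+) (y \notin G).
Proof.
have [xG|xG] := boolP (x \in G); first by rewrite rpredDl.
have [yG|yG] := boolP (y \in G); first by rewrite rpredDr ?xG.
by rewrite codim1_memvD.
Qed.

End Codim1F2.

Section Rows.
Variables (R : nzRingType) (r : nat).
Implicit Types (I : {set 'I_r}) (v : 'rV[R]_r).

Definition rsupp v := [set i | v 0 i != 0].

Definition restrict_row I v := \row_i (if i \in I then v 0 i else 0).

Lemma restrict_rowC I v : restrict_row (~: I) v = v - restrict_row I v.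
Proof. by apply/rowP => i; rewrite !mxE inE; case: (i \in I); rewrite ?subrr ?subr0. Qed.

Lemma rsupp_restrict_row I v : rsupp (restrict_row I v) = rsupp v :&: I.
Proof.
by apply/setP => i; rewrite !inE mxE; case: (i \in I); rewrite ?eqxx ?andbT ?andbF.
Qed.

Lemma restrict_rsupp v : restrict_row (rsupp v) v = v.
Proof. by apply/rowP => i; rewrite mxE inE; case: eqP. Qed.

Lemma rsupp_eq0 v : (rsupp v == set0) = (v == 0).
Proof.
apply/eqP/eqP => [supp0|->]; last by apply/setP => i; rewrite !inE mxE eqxx.
by rewrite -[v]restrict_rsupp supp0; apply/rowP => i; rewrite mxE inE mxE.
Qed.

End Rows.

Section RowsF2.
Variable r : nat.
Implicit Types (G : {vspace 'rV['F_2]_r}) (I : {set 'I_r}) (v : 'rV['F_2]_r).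

Lemma rsupp_ones : rsupp (ones r) = setT.
Proof. by apply/setP => i; rewrite !inE mxE oner_neq0. Qed.

Lemma ones_neq0 : (0 < r)%N -> ones r != 0.
Proof.
move=> r_gt0; apply/negP => /eqP/rowP/(_ (Ordinal r_gt0)).
by rewrite !mxE; apply/eqP; rewrite oner_neq0.
Qed.

Lemma restrict_row_supported I v : supported_in I (restrict_row I v).
Proof. by move=> i /negbTE iI; rewrite mxE iI. Qed.

Lemma decomposable_restrict_row G I :
  I != set0 -> ~: I != set0 -> (forall g, g \in G -> restrict_row I g \in G) ->
  decomposable G.
Proof.
move=> I0 IC0 GI; exists I; split=> // g gG.
exists (restrict_row I g), (restrict_row (~: I) g).
have gIC := restrict_rowC I g.
split; rewrite ?GI //; try exact: restrict_row_supported.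
- by rewrite gIC addrC subrK.
- by rewrite gIC memvB ?GI.
Qed.

End RowsF2.

Section Codim1Rows.
Variables (r : nat) (G : {vspace 'rV['F_2]_r}).
Hypothesis dimG : \dim G = r.-1.

Definition notin_coords := [set i | 'e_i \notin G].

Lemma codim1_notin_parity x : (x \notin G) = odd #|rsupp x :&: notin_coords|.
Proof.
have dimG' : \dim G = (\dim {:'rV['F_2]_r}).-1 by rewrite dim_rowv.
rewrite {1}(row_sum_delta x) (big_morph _ (codim1_notinD dimG') (id1 := false)).
  rewrite -sum1_card (big_morph odd oddD (id1 := false)) // [RHS]big_mkcond.
  apply: eq_bigr => i _; rewrite !inE.
  case: (F2_cases (x 0 i)) => ->; first by rewrite scale0r mem0v eqxx.
  by rewrite scale1r oner_neq0 /=; case: ('e_i \notin G).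
by rewrite mem0v.
Qed.

Lemma restrict_notin_coords x : (restrict_row notin_coords x \in G) = (x \in G).
Proof.
by rewrite -[LHS]negbK -[RHS]negbK !codim1_notin_parity rsupp_restrict_row -setIA setIid.
Qed.

Lemma codim1_indecomposable_even :
  (0 < r)%N -> ones r \in G -> ~ decomposable G -> ~~ odd r /\ G =i even_code r.
Proof.
move=> r_gt0 onesG indecG.
have [coordsT|coordsT] := eqVneq notin_coords setT.
  have memG x : (x \in G) = even_code r x.
    by rewrite -[LHS]negbK codim1_notin_parity coordsT setIT.
  split=> //; move: onesG; rewrite memG /even_code /weight.
  by rewrite -/(rsupp (ones r)) rsupp_ones cardsT card_ord.
exfalso; apply: indecG; apply: (decomposable_restrict_row (I := notin_coords)).
- apply/eqP => coords0; suff GT : G = fullv by move: dimG; rewrite GT dim_rowv; lia.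
  apply/vspaceP => x; rewrite memvf -[x \in G]negbK codim1_notin_parity.
  by rewrite coords0 setI0 cards0.
- by apply: contra_neq coordsT => /(congr1 (@setC _)); rewrite setCK setC0.
- by move=> g; rewrite restrict_notin_coords.
Qed.

End Codim1Rows.

Lemma dim2_decomposable r (G : {vspace 'rV['F_2]_r}) :
  (0 < r)%N -> ones r \in G -> \dim G = 2 -> decomposable G.
Proof.
move=> r_gt0 onesG dimG; have ones0 := ones_neq0 r_gt0.
have [g gG g_ones] : exists2 g, g \in G & g \notin <[ones r]>%VS.
  by apply/subvPn/negP => /dimvS; rewrite dimG dim_vline ones0.
have GE := dimv2_addv_line ones0 onesG gG g_ones dimG.
apply: (decomposable_restrict_row (I := rsupp g)).
- by rewrite rsupp_eq0; apply: contraNneq g_ones => ->; apply: mem0v.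
- apply: contraNneq g_ones => /(congr1 (@setC _)); rewrite setCK setC0 => suppT.
  suff -> : g = ones r by apply: memv_line.
  apply/rowP => i; have : i \in rsupp g by rewrite suppT inE.
  by rewrite inE mxE; case: (F2_cases (g 0 i)) => ->; rewrite ?eqxx.
move=> x; rewrite {1}GE => /memv_addP [_ /vlineP [a ->] [_ /vlineP [b ->] ->]].
suff -> : restrict_row (rsupp g) (a *: ones r + b *: g) = (a + b) *: g by apply: memvZ.
apply/rowP => i; rewrite !mxE inE.
by case: (F2_cases (g 0 i)) => ->; rewrite ?eqxx ?oner_neq0 ?mulr0 ?mulr1.
Qed.

Theorem mainTheorem17 (r : nat) (G : {vspace 'rV['F_2]_r}) :
  (1 <= r)%N -> ones r \in G ->
  [/\ (\dim G = 1)%N -> G = <[ones r]>%VS,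
      (\dim G = r)%N -> G = fullv,
      (\dim G = 2)%N -> decomposable G
    & (\dim G = r.-1)%N -> ~ decomposable G ->
        ~~ odd r /\ G =i even_code r].
Proof.
move=> r_gt0 onesG; split.
- exact/dimv1_vline/ones_neq0.
- by move=> dimG; apply: dimv_fullv; rewrite dim_rowv.
- exact: dim2_decomposable.
- by move=> dimG; apply: codim1_indecomposable_even.
Qed.
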